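(* Let $n\in\mathbb{N}$, $H\in\mathbb{R}^{n\times n}$, $W\succ 0$ in $\mathbb{R}^{n\times n}$, and $C=\mathrm{diag}(C_{11},\dots,C_{nn})$ diagonal with all $C_{ii}\ne 0$; assume $(H,C)$ observable and $(H,D)$ controllable where $W=DD^T$. Let $\Delta>0$ (the $\ell_2$-sensitivity $\Delta_{\ell_2}y$), let $\delta\in[10^{-5},10^{-1}]$, let $\epsilon>0$, and set $$\sigma=\frac{\Delta}{2\epsilon}\Big(K_\delta+\sqrt{K_\delta^2+2\epsilon}\Big),\qquad K_\delta:=\mathcal Q^{-1}(\delta),$$ and $V=\sigma^2 I_n$. Let $\Sigma$ be the unique positive semidefinite solution of $\Sigma = H\Sigma H^T - H\Sigma C^T(C\Sigma C^T+V)^{-1}C\Sigma H^T + W$. Let $B_l,B_u$ satisfy $\mathrm{tr}\,W<B_l<\mathrm{tr}\,W+\mathrm{tr}(H^TH)\lambda_n(W)$ and $B_u>\mathrm{tr}\,W$, and define $$\eta_1:=\left(\frac{(B_l-\mathrm{tr}\,W)\,\lambda_n(W)\,C_u^2}{\Delta^2\big(\mathrm{tr}(H^TH)\lambda_n(W)-B_l+\mathrm{tr}\,W\big)}\right)^{1/2},\qquad \eta_3:=\left(\frac{(B_u-\mathrm{tr}\,W)\,C_l^2}{\Delta^2\,\mathrm{tr}(H^TH)}\right)^{1/2}.$$ If $$\frac18\left(\frac{1+\sqrt{36\eta_3+1}}{\eta_3}\right)^2\le\epsilon,$$ then $\mathrm{tr}\,\Sigma\le B_u$; and if $\epsilon\le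 1/\eta_1$, then $\mathrm{tr}\,\Sigma\ge B_l$. In particular, if both inequalities on $\epsilon$ hold, then $B_l\le\mathrm{tr}\,\Sigma\le B_u$.
   Context: $\mathcal Q(y)=\frac{1}{\sqrt{2\pi}}\int_y^\infty e^{-z^2/2}\,dz$ is the Gaussian tail function and $\mathcal Q^{-1}$ its inverse. The noise level $\sigma$ is the Gaussian-mechanism noise giving $(\epsilon,\delta)$-differential privacy of the state trajectory when $\Delta$ is the sensitivity $\Delta_{\ell_2}y=\sup\{\|Cx-Cx'\|_{\ell_2}:\|x-x'\|_{\ell_2}\le B\}$; for the claim, $\Delta$ may be any positive constant. $\mathrm{tr}\,\Sigma$ is the steady-state mean squared a priori (prediction) error of the Kalman filter. $\lambda_n(W)$ is the smallest eigenvalue of $W$. $C_l:=C_{ll}$ with $l=\arg\min_i C_{ii}^2$ and $C_u:=C_{uu}$ with $u=\arg\max_i C_{ii}^2$. *)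

From Stdlib Require Import Reals Lra.
Open Scope R_scope.

(* Real matrices are functions nat -> nat -> R; only entries with indices
   below the relevant dimensions matter.  Vectors are nat -> R. *)
Definition mat := nat -> nat -> R.
Definition vec := nat -> R.

Fixpoint rsum (n : nat) (f : nat -> R) : R :=
  match n with O => 0 | S k => rsum k f + f k end.

Definition mmul (k : nat) (A B : mat) : mat :=
  fun i j => rsum k (fun l => A i l * B l j).
Definition madd (A B : mat) : mat := fun i j => A i j + B i j.
Definition msub (A B : mat) : mat := fun i j => A i j - B i j.
Definition mtr (A : mat) : mat := fun i j => A j i.
Definition mscal (c : R) (A : mat) : mat := fun i j => c * A i j.
Definition mid : mat := fun i j => if Nat.eqb i j then 1 else 0.
Definition mvec (k : nat) (A : mat) (x : vec) : vec :=
  fun i => rsum k (fun l => A i l * x l).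
Fixpoint mpow (n : nat) (A : mat) (p : nat) : mat :=
  match p with O => mid | S q => mmul n A (mpow n A q) end.

Definition meq (a b : nat) (A B : mat) : Prop :=
  forall i j, (i < a)%nat -> (j < b)%nat -> A i j = B i j.

Definition trace (n : nat) (A : mat) : R := rsum n (fun i => A i i).

Definition symmetric (n : nat) (A : mat) : Prop := meq n n A (mtr A).
Definition quad (n : nat) (A : mat) (x : vec) : R :=
  rsum n (fun i => x i * mvec n A x i).
Definition nonzero_vec (n : nat) (x : vec) : Prop := exists i, (i < n)%nat /\ x i <> 0.

Definition posdef (n : nat) (A : mat) : Prop :=
  symmetric n A /\ forall x, nonzero_vec n x -> quad n A x > 0.
Definition possemidef (n : nat) (A : mat) : Prop :=
  symmetric n A /\ forall x, quad n A x >= 0.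

Definition diag_nonsingular (n : nat) (C : mat) : Prop :=
  (forall i j, (i < n)%nat -> (j < n)%nat -> i <> j -> C i j = 0) /\
  (forall i, (i < n)%nat -> C i i <> 0).

Definition is_eigenvalue (n : nat) (A : mat) (lam : R) : Prop :=
  exists x, nonzero_vec n x /\ forall i, (i < n)%nat -> mvec n A x i = lam * x i.
Definition is_min_eigenvalue (n : nat) (A : mat) (lam : R) : Prop :=
  is_eigenvalue n A lam /\ forall mu, is_eigenvalue n A mu -> lam <= mu.

(* (H, C) observable, H : n x n, C : p x n:  the observability matrix
   [C; CH; ...; CH^(n-1)] has rank n, i.e. trivial kernel *)
Definition observable (n p : nat) (H C : mat) : Prop :=
  forall x : vec,
    (forall k i, (k < n)%nat -> (i < p)%nat -> mvec n (mmul n C (mpow n H k)) x i = 0) ->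
    forall i, (i < n)%nat -> x i = 0.

(* (H, D) controllable, H : n x n, D : n x m: the controllability matrix
   [D, HD, ..., H^(n-1) D] has rank n, i.e. no nonzero left annihilator *)
Definition controllable (n m : nat) (H D : mat) : Prop :=
  forall y : vec,
    (forall k j, (k < n)%nat -> (j < m)%nat ->
       rsum n (fun i => y i * mmul n (mpow n H k) D i j) = 0) ->
    forall i, (i < n)%nat -> y i = 0.

Definition riccati (n : nat) (H C V W S : mat) : Prop :=
  let M := madd (mmul n (mmul n C S) (mtr C)) V in
  exists Minv : mat,
    meq n n (mmul n M Minv) mid /\ meq n n (mmul n Minv M) mid /\
    meq n n S
      (madd (msub (mmul n (mmul n H S) (mtr H))
                  (mmul n (mmul n (mmul n (mmul n (mmul n H S) (mtr C)) Minv) (mmul n C S)) (mtr H)))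
            W).

(* Gaussian tail: gauss_tail y q  <->  Q(y) = q, where
   Q(y) = 1/sqrt(2 pi) * int_y^infty exp(-z^2/2) dz  (improper Riemann integral) *)
Definition gauss_tail (y q : R) : Prop :=
  forall eps, eps > 0 -> exists T0, forall T, T0 <= T -> y <= T ->
    exists pr : Riemann_integrable (fun z => exp (- (z ^ 2) / 2)) y T,
      Rabs (RiemannInt pr / sqrt (2 * PI) - q) < eps.

From Stdlib Require Import Reals Lra Lia Classical FunctionalExtensionality.
From Coquelicot Require Import Coquelicot.
Open Scope R_scope.

(* Write the Riccati equation as Sigma = H P H^T + W, where
   P = Sigma - Sigma C^T (C Sigma C^T + V)^{-1} C Sigma is the a posteriori
   covariance; summing over the rows h_k of H gives tr Sigma = tr W + sum_k h_k^T P h_k.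
   For diagonal C the form of P is squeezed between
     sum_i sigma^2 lam v_i^2 / (sigma^2 + lam C_ii^2)   and   sigma^2 sum_i v_i^2 / C_ii^2
   as soon as Sigma >= lam I.  Since Sigma >= W >= lambda_n(W) I, this yields
     tr W + sigma^2 lam / (sigma^2 + lam C_u^2) tr(H^T H) <= tr Sigma
                                        <= tr W + sigma^2 / C_l^2 tr(H^T H).
   Finally, Gaussian tail estimates give 1 <= Q^{-1}(delta) <= 9/2 for
   delta in [1e-5, 1e-1]; with sigma = Delta (K + sqrt(K^2 + 2 eps)) / (2 eps)
   the two conditions on eps become Delta eta1 <= sigma and sigma <= Delta eta3,
   which place the two trace estimates within [Bl, Bu]. *)

Lemma rsum_ext n f g : (forall i, (i < n)%nat -> f i = g i) -> rsum n f = rsum n g.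
Proof.
  induction n as [|n IH]; intros Hfg; simpl; [reflexivity|].
  rewrite IH by (intros; apply Hfg; lia). rewrite Hfg by lia. reflexivity.
Qed.

Lemma rsum_plus n f g : rsum n (fun i => f i + g i) = rsum n f + rsum n g.
Proof. induction n as [|n IH]; simpl; [lra|]. rewrite IH; lra. Qed.

Lemma rsum_minus n f g : rsum n (fun i => f i - g i) = rsum n f - rsum n g.
Proof. induction n as [|n IH]; simpl; [lra|]. rewrite IH; lra. Qed.

Lemma rsum_scal n c f : rsum n (fun i => c * f i) = c * rsum n f.
Proof. induction n as [|n IH]; simpl; [lra|]. rewrite IH; lra. Qed.

Lemma rsum_scalr n c f : rsum n (fun i => f i * c) = rsum n f * c.
Proof. induction n as [|n IH]; simpl; [lra|]. rewrite IH; lra. Qed.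

Lemma rsum_zero n : rsum n (fun _ => 0) = 0.
Proof. induction n as [|n IH]; simpl; [lra|]. rewrite IH; lra. Qed.

Lemma rsum_le n f g : (forall i, (i < n)%nat -> f i <= g i) -> rsum n f <= rsum n g.
Proof.
  induction n as [|n IH]; intros Hfg; simpl; [lra|].
  assert (rsum n f <= rsum n g) by (apply IH; intros; apply Hfg; lia).
  assert (f n <= g n) by (apply Hfg; lia).
  lra.
Qed.

Lemma rsum_nonneg n f : (forall i, (i < n)%nat -> 0 <= f i) -> 0 <= rsum n f.
Proof. intros Hf. rewrite <- (rsum_zero n). apply rsum_le; exact Hf. Qed.

Lemma rsum_nonneg_zero n f : (forall i, (i < n)%nat -> 0 <= f i) -> rsum n f = 0 ->
  forall i, (i < n)%nat -> f i = 0.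
Proof.
  induction n as [|n IH]; intros Hf Hsum i Hi; [lia|]. simpl in Hsum.
  assert (0 <= rsum n f) by (apply rsum_nonneg; intros; apply Hf; lia).
  assert (0 <= f n) by (apply Hf; lia).
  destruct (Nat.eq_dec i n) as [->|Hne]; [lra|].
  apply IH; [intros; apply Hf; lia | lra | lia].
Qed.

Lemma rsum_swap n m (f : nat -> nat -> R) :
  rsum n (fun i => rsum m (fun j => f i j)) = rsum m (fun j => rsum n (fun i => f i j)).
Proof.
  induction n as [|n IH]; simpl; [symmetry; apply rsum_zero|].
  rewrite IH, <- rsum_plus. reflexivity.
Qed.

Definition basis (k : nat) : vec := fun i => if Nat.eqb i k then 1 else 0.

Lemma rsum_basis n k (a : nat -> R) : (k < n)%nat ->
  rsum n (fun i => basis k i * a i) = a k.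
Proof.
  induction n as [|n IH]; intros Hk; [lia|]. simpl. unfold basis at 2.
  destruct (Nat.eqb n k) eqn:E.
  - apply Nat.eqb_eq in E; subst.
    rewrite (rsum_ext _ _ (fun _ => 0)), rsum_zero; [lra|].
    intros i Hi. unfold basis. destruct (Nat.eqb_spec i k); [lia | lra].
  - apply Nat.eqb_neq in E. rewrite IH by lia. lra.
Qed.

Definition dot (n : nat) (x y : vec) : R := rsum n (fun i => x i * y i).

Lemma dot_sym n x y : dot n x y = dot n y x.
Proof. unfold dot; apply rsum_ext; intros; lra. Qed.

Lemma dot_nonneg n x : 0 <= dot n x x.
Proof. unfold dot; apply rsum_nonneg; intros; nra. Qed.

Lemma dot_ext n x y x' y' : (forall j, (j < n)%nat -> x j = x' j) ->
  (forall j, (j < n)%nat -> y j = y' j) -> dot n x y = dot n x' y'.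
Proof. intros Hx Hy; unfold dot; apply rsum_ext; intros; rewrite Hx, Hy; auto. Qed.

Lemma dot_eq0 n x : dot n x x = 0 -> forall i, (i < n)%nat -> x i = 0.
Proof.
  intros H0 i Hi.
  assert (x i * x i = 0) by (apply (rsum_nonneg_zero n (fun i => x i * x i)); auto; intros; nra).
  nra.
Qed.

Lemma dot_shift n x b t :
  dot n (fun i => x i - t * b i) (fun i => x i - t * b i)
  = dot n x x - 2 * t * dot n b x + t ^ 2 * dot n b b.
Proof.
  unfold dot. rewrite <- !rsum_scal, <- rsum_minus, <- rsum_plus.
  apply rsum_ext; intros; ring.
Qed.

Lemma cauchy_schwarz n b x : (dot n b x) ^ 2 <= dot n b b * dot n x x.
Proof.
  pose proof (dot_nonneg n b). pose proof (dot_nonneg n x).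
  destruct (Req_dec (dot n b b) 0) as [Eb|Eb].
  - destruct (Req_dec (dot n b x) 0) as [Ebx|Ebx]; [rewrite Ebx, Eb; lra|].
    pose proof (dot_nonneg n (fun i => x i - (dot n x x + 1) / (2 * dot n b x) * b i)) as Hq.
    rewrite dot_shift, Eb in Hq.
    replace (2 * ((dot n x x + 1) / (2 * dot n b x)) * dot n b x) with (dot n x x + 1) in Hq
      by (field; auto).
    lra.
  - pose proof (dot_nonneg n (fun i => x i - dot n b x / dot n b b * b i)) as Hq.
    rewrite dot_shift in Hq.
    replace (dot n x x - 2 * (dot n b x / dot n b b) * dot n b x
             + (dot n b x / dot n b b) ^ 2 * dot n b b)
      with ((dot n b b * dot n x x - (dot n b x) ^ 2) / dot n b b) in Hq by (field; auto).
    assert (0 < dot n b b) by lra.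
    apply Rmult_le_compat_r with (r := dot n b b) in Hq; [|lra].
    unfold Rdiv in Hq. rewrite Rmult_0_l, Rmult_assoc, Rinv_l, Rmult_1_r in Hq by lra.
    lra.
Qed.

Lemma mvec_ext n A B x y i : meq n n A B -> (forall j, (j < n)%nat -> x j = y j) ->
  (i < n)%nat -> mvec n A x i = mvec n B y i.
Proof. intros HAB Hxy Hi. unfold mvec. apply rsum_ext; intros. rewrite HAB, Hxy; auto. Qed.

Lemma mvec_mmul n A B x i : mvec n (mmul n A B) x i = mvec n A (mvec n B x) i.
Proof.
  unfold mvec, mmul.
  transitivity (rsum n (fun l => rsum n (fun k => A i k * B k l * x l))).
  - apply rsum_ext; intros. rewrite <- rsum_scalr. reflexivity.
  - rewrite rsum_swap. apply rsum_ext; intros. rewrite <- rsum_scal.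
    apply rsum_ext; intros; lra.
Qed.

Lemma mvec_madd n A B x i : mvec n (madd A B) x i = mvec n A x i + mvec n B x i.
Proof. unfold mvec, madd. rewrite <- rsum_plus. apply rsum_ext; intros; lra. Qed.

Lemma mvec_minus n A x y i : mvec n A (fun j => x j - y j) i = mvec n A x i - mvec n A y i.
Proof. unfold mvec. rewrite <- rsum_minus. apply rsum_ext; intros; lra. Qed.

Lemma mvec_scalmid n c x i : (i < n)%nat -> mvec n (mscal c mid) x i = c * x i.
Proof.
  intros Hi. unfold mvec, mscal, mid. rewrite <- (rsum_basis n i x) by exact Hi.
  rewrite <- rsum_scal. apply rsum_ext; intros j _. unfold basis.
  rewrite Nat.eqb_sym. destruct (Nat.eqb j i); lra.
Qed.

Lemma mvec_mid n x i : (i < n)%nat -> mvec n mid x i = x i.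
Proof.
  intros Hi. rewrite <- (Rmult_1_l (x i)), <- (mvec_scalmid n 1 x i Hi).
  unfold mvec, mscal. apply rsum_ext; intros; lra.
Qed.

Lemma mvec_sym n S v i : symmetric n S -> (i < n)%nat -> mvec n (mtr S) v i = mvec n S v i.
Proof. intros HS Hi. unfold mvec. apply rsum_ext; intros. unfold mtr. rewrite (HS i); auto. Qed.

Lemma dot_mvec n x A y : dot n x (mvec n A y) = dot n (mvec n (mtr A) x) y.
Proof.
  unfold dot, mvec, mtr.
  transitivity (rsum n (fun i => rsum n (fun l => x i * A i l * y l))).
  - apply rsum_ext; intros. rewrite <- rsum_scal. apply rsum_ext; intros; lra.
  - rewrite rsum_swap. apply rsum_ext; intros. rewrite <- rsum_scalr.
    apply rsum_ext; intros; lra.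
Qed.

Lemma mtr_basis n A k : (k < n)%nat -> mvec n (mtr A) (basis k) = fun j => A k j.
Proof.
  intros Hk. apply functional_extensionality; intros j. unfold mvec, mtr.
  rewrite <- (rsum_basis n k (fun i => A i j)) by exact Hk.
  apply rsum_ext; intros; lra.
Qed.

Lemma quad_dot n A x : quad n A x = dot n x (mvec n A x).
Proof. reflexivity. Qed.

Lemma quad_ext n A B x : meq n n A B -> quad n A x = quad n B x.
Proof. intros HAB. unfold quad. apply rsum_ext; intros. f_equal. apply mvec_ext; auto. Qed.

Lemma quad_ext_vec n A x y : (forall i, (i < n)%nat -> x i = y i) -> quad n A x = quad n A y.
Proof.
  intros Hxy. apply dot_ext; [exact Hxy|]. intros i _. unfold mvec.
  apply rsum_ext; intros. rewrite Hxy; auto.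
Qed.

Lemma quad_madd n A B x : quad n (madd A B) x = quad n A x + quad n B x.
Proof.
  unfold quad. rewrite <- rsum_plus. apply rsum_ext; intros. rewrite mvec_madd. ring.
Qed.

Lemma quad_msub n A B x : quad n (msub A B) x = quad n A x - quad n B x.
Proof.
  unfold quad, mvec, msub. rewrite <- rsum_minus. apply rsum_ext; intros.
  rewrite <- Rmult_minus_distr_l, <- rsum_minus. f_equal. apply rsum_ext; intros; lra.
Qed.

Lemma quad_scalmid n c x : quad n (mscal c mid) x = c * dot n x x.
Proof.
  unfold quad, dot. rewrite <- rsum_scal. apply rsum_ext; intros. rewrite mvec_scalmid; auto; ring.
Qed.

Lemma quad_zero n A x : (forall i, (i < n)%nat -> x i = 0) -> quad n A x = 0.
Proof.
  intros Hx. unfold quad. rewrite <- (rsum_zero n). apply rsum_ext; intros. rewrite Hx; auto; lra.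
Qed.

Lemma quad_line n B x y t : symmetric n B ->
  quad n B (fun i => x i + t * y i)
  = quad n B x + 2 * t * dot n y (mvec n B x) + t ^ 2 * quad n B y.
Proof.
  intros HB. rewrite !quad_dot.
  assert (Hsym : dot n x (mvec n B y) = dot n y (mvec n B x)).
  { rewrite dot_mvec, dot_sym. apply dot_ext; auto. intros; apply mvec_sym; auto. }
  rewrite (dot_ext n _ _ (fun i => x i + t * y i) (fun i => mvec n B x i + t * mvec n B y i));
    [| auto | intros; unfold mvec; rewrite <- rsum_scal, <- rsum_plus; apply rsum_ext; intros; ring].
  unfold dot in *. rewrite <- !rsum_scal.
  rewrite (rsum_ext n _ (fun i => (x i * mvec n B x i + t * (x i * mvec n B y i))
                                  + (t * (y i * mvec n B x i) + t ^ 2 * (y i * mvec n B y i))))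
    by (intros; ring).
  rewrite !rsum_plus, !rsum_scal, Hsym. ring.
Qed.

Lemma psd_kernel n B x : symmetric n B -> (forall y, quad n B y >= 0) -> quad n B x = 0 ->
  forall i, (i < n)%nat -> mvec n B x i = 0.
Proof.
  intros HB Hpsd Hx. set (y := mvec n B x). apply dot_eq0.
  set (q := quad n B y). set (yy := dot n y y).
  assert (q >= 0) by apply Hpsd. assert (0 <= yy) by apply dot_nonneg.
  destruct (Req_dec yy 0) as [|Hyy]; [assumption|exfalso].
  pose proof (Hpsd (fun i => x i + (- yy / (q + 1)) * y i)) as Hline.
  rewrite quad_line, Hx in Hline by exact HB. fold y yy q in Hline.
  replace (0 + 2 * (- yy / (q + 1)) * yy + (- yy / (q + 1)) ^ 2 * q)
    with (- (yy ^ 2 * (q + 2)) / (q + 1) ^ 2) in Hline by (field; lra).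
  assert (0 < yy ^ 2 * (q + 2)) by (assert (0 < yy ^ 2) by nra; nra).
  assert (0 < / (q + 1) ^ 2) by (apply Rinv_0_lt_compat; nra).
  unfold Rdiv in Hline. nra.
Qed.

Lemma quad_basis n A k : (k < n)%nat -> quad n A (basis k) = A k k.
Proof.
  intros Hk. unfold quad, dot. rewrite rsum_basis by exact Hk. unfold mvec.
  rewrite (rsum_ext n _ (fun l => basis k l * A k l)) by (intros; ring).
  apply rsum_basis; exact Hk.
Qed.

Lemma trace_quad n A : trace n A = rsum n (fun k => quad n A (basis k)).
Proof. unfold trace. apply rsum_ext; intros k Hk. symmetry; apply quad_basis; exact Hk. Qed.

Lemma quad_last n B x : symmetric (S n) B ->
  quad (S n) B x = quad n B x + 2 * x n * dot n (fun i => B n i) x + B n n * (x n) ^ 2.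
Proof.
  intros HB. unfold quad, mvec, dot. cbn [rsum].
  rewrite (rsum_ext n (fun i => x i * (rsum n (fun l => B i l * x l) + B i n * x n))
             (fun i => x i * rsum n (fun l => B i l * x l) + x n * (B n i * x i))).
  - rewrite rsum_plus, rsum_scal. ring.
  - intros i Hi. rewrite (HB i n) by lia. unfold mtr. ring.
Qed.

Lemma quad_schur n B a x : a <> 0 ->
  quad n (fun i j => B i j - B n i * B n j / a) x
  = quad n B x - (dot n (fun i => B n i) x) ^ 2 / a.
Proof.
  intros Ha. unfold quad, mvec, dot.
  rewrite (rsum_ext n _ (fun i => x i * rsum n (fun l => B i l * x l)
                               - (B n i * x i) * rsum n (fun l => B n l * x l) / a)).
  - rewrite rsum_minus. unfold Rdiv. rewrite rsum_scalr, rsum_scalr. ring.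
  - intros i _. rewrite (rsum_ext n _ (fun l => B i l * x l - (B n i / a) * (B n l * x l)))
      by (intros; field; auto).
    rewrite rsum_minus, rsum_scal. field; auto.
Qed.

(* The real inequality closing the Schur-complement induction: if the form
   equals q + a s^2 with q >= e' N and the coordinate x_n = s - be controlled by
   be^2 <= Kb N, then it dominates e (N + x_n^2) for an explicit e > 0. *)
Lemma schur_lower_bound q a s be Kb e' N : a > 0 -> e' > 0 -> 0 <= Kb -> 0 <= N ->
  q >= e' * N -> be ^ 2 <= Kb * N ->
  q + a * s ^ 2 >= Rmin (a / 2) (e' / (1 + 2 * Kb)) * (N + (s - be) * (s - be)).
Proof.
  intros Ha He' HKb HN Hq Hbe. set (e := Rmin (a / 2) (e' / (1 + 2 * Kb))).
  assert (He1 : e <= a / 2) by apply Rmin_l.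
  assert (He2 : e * (1 + 2 * Kb) <= e').
  { assert (e <= e' / (1 + 2 * Kb)) as Hle by apply Rmin_r.
    apply Rmult_le_compat_r with (r := 1 + 2 * Kb) in Hle; [|lra].
    replace (e' / (1 + 2 * Kb) * (1 + 2 * Kb)) with e' in Hle by (field; lra). lra. }
  assert (He0 : 0 < e) by (apply Rmin_glb_lt; [lra | apply Rdiv_lt_0_compat; lra]).
  assert ((s - be) * (s - be) <= 2 * s ^ 2 + 2 * be ^ 2) by (pose proof (pow2_ge_0 (s + be)); nra).
  nra.
Qed.

(* A positive definite form is uniformly positive: q(x) >= e |x|^2 for some e > 0.
   Induction on the dimension through the Schur complement of the last entry. *)
Lemma uniform_posdef n B : symmetric n B -> (forall x, nonzero_vec n x -> quad n B x > 0) ->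
  exists e, e > 0 /\ forall x, quad n B x >= e * dot n x x.
Proof.
  revert B; induction n as [|n IH]; intros B HS HP.
  { exists 1. split; [lra|]. intros. unfold quad, dot; simpl; lra. }
  set (a := B n n). set (b := fun i => B n i).
  assert (Ha : a > 0).
  { assert (nonzero_vec (S n) (basis n)) as Hnz
      by (exists n; split; [lia | unfold basis; rewrite Nat.eqb_refl; lra]).
    pose proof (HP _ Hnz) as Hpos. rewrite quad_basis in Hpos by lia. exact Hpos. }
  set (B' := fun i j => B i j - B n i * B n j / a).
  assert (HS' : symmetric n B').
  { intros i j Hi Hj. unfold B', mtr. rewrite (HS i j) by lia. unfold mtr. field. lra. }
  assert (Hsplit : forall x, quad (S n) B x = quad n B' x + a * (x n + dot n b x / a) ^ 2).
  { intros x. rewrite quad_last by exact HS. unfold B'. rewrite quad_schur by lra.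
    fold a b. field. lra. }
  assert (HP' : forall x, nonzero_vec n x -> quad n B' x > 0).
  { intros x [i [Hi Hx]].
    set (x' := fun j => if Nat.eqb j n then - (dot n b x / a) else x j).
    assert (Hx' : forall j, (j < n)%nat -> x' j = x j)
      by (intros j Hj; unfold x'; destruct (Nat.eqb_spec j n); [lia | reflexivity]).
    assert (nonzero_vec (S n) x') as Hnz by (exists i; split; [lia | rewrite Hx'; auto]).
    pose proof (HP _ Hnz) as Hpos. rewrite Hsplit in Hpos.
    rewrite (quad_ext_vec n B' x' x), (dot_ext n b x' b x) in Hpos by auto.
    unfold x' in Hpos. rewrite Nat.eqb_refl in Hpos.
    replace (- (dot n b x / a) + dot n b x / a) with 0 in Hpos by ring. lra. }
  destruct (IH B' HS' HP') as [e' [He' Hbound]].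
  set (Kb := dot n b b / a ^ 2).
  assert (HKb : 0 <= Kb)
    by (apply Rmult_le_pos; [apply dot_nonneg | apply Rlt_le, Rinv_0_lt_compat; nra]).
  exists (Rmin (a / 2) (e' / (1 + 2 * Kb))). split.
  { apply Rmin_glb_lt; [lra | apply Rdiv_lt_0_compat; lra]. }
  intros x. rewrite Hsplit. change (dot (S n) x x) with (dot n x x + x n * x n).
  replace (x n) with ((x n + dot n b x / a) - dot n b x / a) at 2 3 by ring.
  apply schur_lower_bound; auto using dot_nonneg.
  replace ((dot n b x / a) ^ 2) with ((dot n b x) ^ 2 * / a ^ 2) by (field; lra).
  replace (Kb * dot n x x) with ((dot n b b * dot n x x) * / a ^ 2) by (unfold Kb; field; lra).
  apply Rmult_le_compat_r; [apply Rlt_le, Rinv_0_lt_compat; nra | apply cauchy_schwarz].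
Qed.

(* The supremum mu of the constants t with q(x) >= t |x|^2 is itself such a
   constant (n > 0 makes the set bounded). *)
Lemma optimal_lower_bound n W : (0 < n)%nat -> (forall x, quad n W x >= 0) ->
  exists mu, (forall x, quad n W x >= mu * dot n x x) /\
             forall t, (forall x, quad n W x >= t * dot n x x) -> t <= mu.
Proof.
  intros Hn Hpsd.
  set (E := fun t => forall x, quad n W x >= t * dot n x x).
  assert (Hbound : bound E).
  { exists (quad n W (basis 0)). intros t Ht. specialize (Ht (basis 0)).
    assert (dot n (basis 0) (basis 0) = 1) as Hone
      by (unfold dot; rewrite rsum_basis by exact Hn; unfold basis; simpl; lra).
    rewrite Hone in Ht. lra. }
  assert (Hne : exists t, E t) by (exists 0; intros x; specialize (Hpsd x); lra).
  destruct (completeness E Hbound Hne) as [mu [Hub Hlub]].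
  exists mu. split; [|exact Hub].
  intros x. apply Rnot_lt_ge. intro Hlt.
  assert (0 <= dot n x x) by apply dot_nonneg.
  destruct (Req_dec (dot n x x) 0) as [E0|E0]; [specialize (Hpsd x); rewrite E0 in Hlt; lra|].
  set (r := quad n W x / dot n x x).
  assert (Hr : quad n W x = r * dot n x x) by (unfold r; field; auto).
  assert (r < mu) by (apply Rmult_lt_reg_r with (dot n x x); lra).
  assert (Hnot : ~ is_upper_bound E r) by (intro Hr'; specialize (Hlub r Hr'); lra).
  apply Hnot. intros t Ht. apply Rnot_lt_le. intro Hrt.
  specialize (Ht x). assert (t * dot n x x > r * dot n x x) by (apply Rmult_gt_compat_r; lra).
  lra.
Qed.

(* The smallest eigenvalue of a positive definite matrix bounds its form from
   below: the optimal constant mu is an eigenvalue, since otherwise W - mu I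
   would be positive definite, hence uniformly so, and mu could be improved. *)
Lemma min_eigenvalue_bound n W lam : posdef n W -> (0 < n)%nat -> is_min_eigenvalue n W lam ->
  forall x, quad n W x >= lam * dot n x x.
Proof.
  intros [HWs HWp] Hn [_ Hmin].
  assert (Hpsd : forall x, quad n W x >= 0).
  { intros x. destruct (classic (nonzero_vec n x)) as [Hx|Hx]; [specialize (HWp x Hx); lra|].
    rewrite quad_zero; [lra|]. intros i Hi. apply NNPP. intro. apply Hx. exists i; auto. }
  destruct (optimal_lower_bound n W Hn Hpsd) as [mu [Hmu Hopt]].
  set (B := msub W (mscal mu mid)).
  assert (HBq : forall x, quad n B x = quad n W x - mu * dot n x x)
    by (intros; unfold B; rewrite quad_msub, quad_scalmid; reflexivity).
  assert (HBs : symmetric n B).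
  { intros i j Hi Hj. unfold B, msub, mscal, mtr, mid. rewrite (HWs i j) by auto. unfold mtr.
    rewrite Nat.eqb_sym. reflexivity. }
  assert (HBp : forall y, quad n B y >= 0) by (intros y; rewrite HBq; specialize (Hmu y); lra).
  assert (Hker : exists x, nonzero_vec n x /\ quad n B x = 0).
  { apply NNPP. intro Hno.
    assert (HPD : forall x, nonzero_vec n x -> quad n B x > 0).
    { intros x Hx. specialize (HBp x).
      destruct (Req_dec (quad n B x) 0); [exfalso; apply Hno; eauto | lra]. }
    destruct (uniform_posdef n B HBs HPD) as [e [He0 He1]].
    assert (mu + e <= mu); [|lra].
    apply Hopt. intros x. specialize (He1 x). rewrite HBq in He1. lra. }
  destruct Hker as [x [Hx Hq]].
  assert (Heig : is_eigenvalue n W mu).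
  { exists x. split; [exact Hx|]. intros i Hi.
    pose proof (psd_kernel n B x HBs HBp Hq i Hi) as Hk.
    unfold B in Hk. unfold mvec, msub in Hk.
    rewrite (rsum_ext n _ (fun l => W i l * x l - mscal mu mid i l * x l)), rsum_minus in Hk
      by (intros; ring).
    fold (mvec n W x i) (mvec n (mscal mu mid) x i) in Hk.
    rewrite mvec_scalmid in Hk by exact Hi. lra. }
  specialize (Hmin mu Heig). intros y. specialize (Hmu y).
  assert (0 <= dot n y y) by apply dot_nonneg. nra.
Qed.

(* Eigenvalues of a positive definite matrix are positive: x^T W x = lam |x|^2. *)
Lemma posdef_eigenvalue_pos n W lam : posdef n W -> is_eigenvalue n W lam -> lam > 0.
Proof.
  intros [_ HWp] [x [Hx Heig]]. specialize (HWp x Hx).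
  rewrite quad_dot, (dot_ext n x _ x (fun i => lam * x i)) in HWp by auto.
  unfold dot in HWp. rewrite (rsum_ext n _ (fun i => lam * (x i * x i))), rsum_scal in HWp
    by (intros; ring).
  fold (dot n x x) in HWp. pose proof (dot_nonneg n x).
  destruct (Rle_lt_dec lam 0); [nra | lra].
Qed.

(* Quadratic form of the a posteriori covariance S - S C^T M^{-1} C S, where
   Minv plays the role of M^{-1}, M = C S C^T + V. *)
Definition posterior_quad (n : nat) (S C Minv : mat) (v : vec) : R :=
  let g := mvec n C (mvec n S v) in quad n S v - dot n g (mvec n Minv g).

Lemma quad_conj n H S x : quad n (mmul n (mmul n H S) (mtr H)) x = quad n S (mvec n (mtr H) x).
Proof.
  rewrite quad_dot, (dot_ext n x _ x (mvec n H (mvec n S (mvec n (mtr H) x))));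
    [apply dot_mvec | auto | intros; rewrite !mvec_mmul; reflexivity].
Qed.

Lemma quad_correction n H C S Minv x : symmetric n S ->
  quad n (mmul n (mmul n (mmul n (mmul n (mmul n H S) (mtr C)) Minv) (mmul n C S)) (mtr H)) x
  = dot n (mvec n C (mvec n S (mvec n (mtr H) x)))
          (mvec n Minv (mvec n C (mvec n S (mvec n (mtr H) x)))).
Proof.
  intros HS. set (v := mvec n (mtr H) x). set (g := mvec n C (mvec n S v)).
  rewrite quad_dot.
  rewrite (dot_ext n x _ x (mvec n H (mvec n S (mvec n (mtr C) (mvec n Minv g))))); auto.
  - rewrite dot_mvec. fold v. do 2 rewrite dot_mvec. apply dot_ext; auto. intros j Hj.
    unfold g. apply (mvec_ext n C C); [red; auto | intros; apply mvec_sym; auto | exact Hj].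
  - intros j Hj. rewrite !mvec_mmul.
    apply mvec_ext; [red; auto | | exact Hj]. intros k Hk.
    apply mvec_ext; [red; auto | | exact Hk]. intros k2 Hk2.
    apply mvec_ext; [red; auto | | exact Hk2]. intros k3 Hk3.
    apply mvec_ext; [red; auto | | exact Hk3]. intros k4 _.
    unfold g. rewrite mvec_mmul. reflexivity.
Qed.

Lemma riccati_quad_split n H C V W S : symmetric n S -> riccati n H C V W S ->
  exists Minv, meq n n (mmul n (madd (mmul n (mmul n C S) (mtr C)) V) Minv) mid /\
    forall x, quad n S x = posterior_quad n S C Minv (mvec n (mtr H) x) + quad n W x.
Proof.
  intros HS [Minv [HM [_ Heq]]]. exists Minv. split; [exact HM|]. intros x.
  rewrite (quad_ext n _ _ x Heq), quad_madd, quad_msub, quad_conj, quad_correction by exact HS.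
  unfold posterior_quad. ring.
Qed.

Lemma trace_split n H S W (Q : vec -> R) :
  (forall x, quad n S x = Q (mvec n (mtr H) x) + quad n W x) ->
  trace n S = trace n W + rsum n (fun k => Q (fun j => H k j)).
Proof.
  intros Hsplit. rewrite !trace_quad, Rplus_comm, <- rsum_plus.
  apply rsum_ext; intros k Hk. rewrite Hsplit, mtr_basis by exact Hk. reflexivity.
Qed.

Lemma trace_HtH n H : trace n (mmul n (mtr H) H) = rsum n (fun k => dot n (fun j => H k j) (fun j => H k j)).
Proof. unfold trace, mmul, mtr, dot. rewrite rsum_swap. reflexivity. Qed.

Lemma mvec_diag n C x i : diag_nonsingular n C -> (i < n)%nat -> mvec n C x i = C i i * x i.
Proof.
  intros [Hoff _] Hi. unfold mvec.
  rewrite (rsum_ext n _ (fun j => basis i j * (C i i * x i))).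
  - apply (rsum_basis n i (fun _ => C i i * x i) Hi).
  - intros j Hj. unfold basis. destruct (Nat.eqb_spec j i) as [->|Hne]; [ring|].
    rewrite Hoff by auto. ring.
Qed.

Lemma mvec_diagT n C x i : diag_nonsingular n C -> (i < n)%nat -> mvec n (mtr C) x i = C i i * x i.
Proof.
  intros [Hoff Hnz] Hi. apply (mvec_diag n (mtr C)); [split|]; auto.
  intros a b Ha Hb Hab. unfold mtr. apply Hoff; auto.
Qed.

(* With w = M^{-1} C S v, u = C^{-1} v and z = u - w one has
   P(v) = sig^2 (|u|^2 - <z,u>)  and  (Cz)^T S (Cz) + sig^2 |z|^2 = sig^2 <z,u>. *)
Section PosteriorForm.

Variables (n : nat) (S C Minv : mat) (sig : R).
Hypothesis HS : symmetric n S.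
Hypothesis HC : diag_nonsingular n C.
Hypothesis HM : meq n n (mmul n (madd (mmul n (mmul n C S) (mtr C)) (mscal (sig ^ 2) mid)) Minv) mid.
Variable v : vec.

Let w := mvec n Minv (mvec n C (mvec n S v)).
Let u := fun i => v i / C i i.
Let z := fun i => u i - w i.

Lemma Cii_neq0 i : (i < n)%nat -> C i i <> 0.
Proof. apply HC. Qed.

(* Row i of M w = C S v, after dividing out the diagonal of C. *)
Lemma gain_equation i : (i < n)%nat ->
  C i i * mvec n S (fun j => C j j * z j) i = sig ^ 2 * w i.
Proof.
  intros Hi.
  assert (HMw : mvec n (madd (mmul n (mmul n C S) (mtr C)) (mscal (sig ^ 2) mid)) w i
                = mvec n C (mvec n S v) i).
  { unfold w. rewrite <- mvec_mmul, (mvec_ext n _ mid _ (mvec n C (mvec n S v)) i HM);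
      auto using mvec_mid. }
  rewrite mvec_madd, mvec_scalmid, !mvec_mmul, !(mvec_diag n C) in HMw by auto.
  rewrite (mvec_ext n S S _ (fun j => C j j * w j) i) in HMw;
    [| red; auto | intros; apply mvec_diagT; auto | exact Hi].
  rewrite (mvec_ext n S S _ (fun j => v j - C j j * w j) i);
    [| red; auto | intros j Hj; unfold z, u; field; apply Cii_neq0; auto | exact Hi].
  rewrite mvec_minus, Rmult_minus_distr_l. lra.
Qed.

Lemma posterior_quad_split :
  posterior_quad n S C Minv v = sig ^ 2 * rsum n (fun i => u i ^ 2) - sig ^ 2 * dot n z u.
Proof.
  unfold posterior_quad. rewrite quad_dot. fold w.
  transitivity (dot n (mvec n S v) (fun j => C j j * z j)).
  { unfold dot. rewrite <- rsum_minus. apply rsum_ext; intros i Hi.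
    rewrite (mvec_diag n C) by auto. unfold z, u. field. apply Cii_neq0; auto. }
  rewrite dot_sym, dot_mvec. unfold dot. rewrite <- !rsum_scal, <- rsum_minus.
  apply rsum_ext; intros i Hi. rewrite mvec_sym by auto.
  pose proof (gain_equation i Hi) as Hg. pose proof (Cii_neq0 i Hi).
  replace (v i) with (C i i * u i) by (unfold u; field; auto).
  replace (mvec n S (fun j => C j j * z j) i * (C i i * u i))
    with (u i * (C i i * mvec n S (fun j => C j j * z j) i)) by ring.
  rewrite Hg. unfold z. ring.
Qed.

Lemma residual_energy :
  quad n S (fun i => C i i * z i) + sig ^ 2 * dot n z z = sig ^ 2 * dot n z u.
Proof.
  rewrite quad_dot. unfold dot. rewrite <- !rsum_scal, <- rsum_plus.
  apply rsum_ext; intros i Hi.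
  replace (C i i * z i * mvec n S (fun j => C j j * z j) i)
    with (z i * (C i i * mvec n S (fun j => C j j * z j) i)) by ring.
  rewrite gain_equation by exact Hi. unfold z. ring.
Qed.

(* Upper bound: <z,u> >= 0 by the energy identity, so P(v) <= sig^2 |u|^2. *)
Lemma posterior_quad_upper : (forall x, quad n S x >= 0) ->
  posterior_quad n S C Minv v <= sig ^ 2 * rsum n (fun i => v i ^ 2 / C i i ^ 2).
Proof.
  intros Hpsd. rewrite posterior_quad_split.
  assert (0 <= sig ^ 2 * dot n z u).
  { rewrite <- residual_energy. pose proof (dot_nonneg n z).
    specialize (Hpsd (fun i => C i i * z i)). pose proof (pow2_ge_0 sig). nra. }
  rewrite (rsum_ext n (fun i => v i ^ 2 / C i i ^ 2) (fun i => u i ^ 2)); [lra|].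
  intros i Hi. unfold u. field. apply Cii_neq0; auto.
Qed.

(* Lower bound when S >= lam I: the energy identity gives
   sig^2 <z,u> >= sum (sig^2 + lam C_ii^2) z_i^2, and completing the square
   in each z_i bounds sig^2 <z,u> by sum sig^4 u_i^2 / (sig^2 + lam C_ii^2). *)
Lemma posterior_quad_lower lam : lam >= 0 -> sig <> 0 ->
  (forall x, quad n S x >= lam * dot n x x) ->
  rsum n (fun i => sig ^ 2 * lam * v i ^ 2 / (sig ^ 2 + lam * C i i ^ 2))
  <= posterior_quad n S C Minv v.
Proof.
  intros Hlam Hsig Hbound. rewrite posterior_quad_split.
  set (d := fun i => sig ^ 2 + lam * C i i ^ 2).
  assert (Hd : forall i, d i > 0)
    by (intro i; unfold d; pose proof (pow2_ge_0 (C i i)); pose proof (Rsqr_pos_lt sig Hsig); unfold Rsqr in *; nra).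
  assert (Henergy : sig ^ 2 * dot n z u >= rsum n (fun i => d i * z i ^ 2)).
  { rewrite <- residual_energy.
    specialize (Hbound (fun i => C i i * z i)).
    replace (rsum n (fun i => d i * z i ^ 2))
      with (lam * dot n (fun i => C i i * z i) (fun i => C i i * z i) + sig ^ 2 * dot n z z)
      by (unfold dot, d; rewrite <- !rsum_scal, <- rsum_plus; apply rsum_ext; intros; ring).
    lra. }
  assert (Hsq : rsum n (fun i => 2 * sig ^ 2 * z i * u i - d i * z i ^ 2)
                <= rsum n (fun i => sig ^ 4 * u i ^ 2 / d i)).
  { apply rsum_le; intros i _. specialize (Hd i).
    assert (0 <= (sig ^ 2 * u i - d i * z i) ^ 2 / d i)
      by (apply Rmult_le_pos; [apply pow2_ge_0 | apply Rlt_le, Rinv_0_lt_compat; lra]).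
    replace (sig ^ 4 * u i ^ 2 / d i)
      with ((sig ^ 2 * u i - d i * z i) ^ 2 / d i + (2 * sig ^ 2 * z i * u i - d i * z i ^ 2))
      by (field; lra).
    lra. }
  rewrite rsum_minus in Hsq.
  replace (rsum n (fun i => 2 * sig ^ 2 * z i * u i)) with (2 * (sig ^ 2 * dot n z u)) in Hsq
    by (unfold dot; rewrite <- !rsum_scal; apply rsum_ext; intros; ring).
  replace (rsum n (fun i => sig ^ 2 * lam * v i ^ 2 / (sig ^ 2 + lam * C i i ^ 2)))
    with (sig ^ 2 * rsum n (fun i => u i ^ 2) - rsum n (fun i => sig ^ 4 * u i ^ 2 / d i)).
  - lra.
  - rewrite <- rsum_scal, <- rsum_minus. apply rsum_ext; intros i Hi.
    pose proof (Cii_neq0 i Hi). specialize (Hd i). unfold d, u in *. field. lra.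
Qed.

Lemma posterior_quad_nonneg : (forall x, quad n S x >= 0) -> sig <> 0 ->
  0 <= posterior_quad n S C Minv v.
Proof.
  intros Hpsd Hsig. eapply Rle_trans; [|apply (posterior_quad_lower 0); auto; [lra|]].
  - rewrite (rsum_ext n _ (fun _ => 0)), rsum_zero by (intros; unfold Rdiv; ring). lra.
  - intros x. specialize (Hpsd x). lra.
Qed.

End PosteriorForm.

Lemma ratio_le_min s x a b : 0 < a -> a <= b -> s ^ 2 * (x ^ 2 / b) <= s ^ 2 / a * (x * x).
Proof.
  intros Ha Hab. assert (/ b <= / a) by (apply Rinv_le_contravar; lra).
  assert (0 <= s ^ 2 * (x * x)) by (apply Rmult_le_pos; [apply pow2_ge_0 | nra]).
  unfold Rdiv. replace (s ^ 2 * (x ^ 2 * / b)) with ((s ^ 2 * (x * x)) * / b) by ring.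
  replace (s ^ 2 * / a * (x * x)) with ((s ^ 2 * (x * x)) * / a) by ring.
  apply Rmult_le_compat_l; assumption.
Qed.

Lemma ratio_ge_max s lam x a b : lam > 0 -> 0 <= a <= b -> s <> 0 ->
  s ^ 2 * lam / (s ^ 2 + lam * b) * (x * x) <= s ^ 2 * lam * x ^ 2 / (s ^ 2 + lam * a).
Proof.
  intros Hlam Hab Hs. pose proof (Rsqr_pos_lt s Hs). unfold Rsqr in *.
  assert (/ (s ^ 2 + lam * b) <= / (s ^ 2 + lam * a)) by (apply Rinv_le_contravar; nra).
  assert (0 <= s ^ 2 * lam * (x * x)) by (apply Rmult_le_pos; [apply Rmult_le_pos | ]; nra).
  unfold Rdiv.
  replace (s ^ 2 * lam * / (s ^ 2 + lam * b) * (x * x)) with ((s ^ 2 * lam * (x * x)) * / (s ^ 2 + lam * b)) by ring.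
  replace (s ^ 2 * lam * x ^ 2 * / (s ^ 2 + lam * a)) with ((s ^ 2 * lam * (x * x)) * / (s ^ 2 + lam * a)) by ring.
  apply Rmult_le_compat_l; assumption.
Qed.

Lemma riccati_trace_upper n H C W S sig l :
  possemidef n S -> riccati n H C (mscal (sig ^ 2) mid) W S -> diag_nonsingular n C ->
  (l < n)%nat -> (forall i, (i < n)%nat -> C l l ^ 2 <= C i i ^ 2) ->
  trace n S <= trace n W + sig ^ 2 / C l l ^ 2 * trace n (mmul n (mtr H) H).
Proof.
  intros [HS Hpsd] Hric HC Hl Hmin.
  destruct (riccati_quad_split n H C _ W S HS Hric) as [Minv [HM Hsplit]].
  assert (HCl : 0 < C l l ^ 2)
    by (assert (C l l <> 0) as Hnz by (apply HC; exact Hl);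
        pose proof (Rsqr_pos_lt _ Hnz); unfold Rsqr in *; nra).
  rewrite (trace_split n H S W _ Hsplit), trace_HtH, <- rsum_scal.
  apply Rplus_le_compat_l, rsum_le; intros k Hk.
  eapply Rle_trans; [apply (posterior_quad_upper n S C Minv sig); assumption|].
  unfold dot. rewrite <- rsum_scal, <- rsum_scal. apply rsum_le; intros j Hj.
  apply ratio_le_min; auto.
Qed.

Lemma riccati_trace_lower n H C W S sig lam u :
  possemidef n S -> riccati n H C (mscal (sig ^ 2) mid) W S -> diag_nonsingular n C ->
  sig <> 0 -> lam > 0 -> (forall x, quad n W x >= lam * dot n x x) ->
  (u < n)%nat -> (forall i, (i < n)%nat -> C i i ^ 2 <= C u u ^ 2) ->
  trace n W + sig ^ 2 * lam / (sig ^ 2 + lam * C u u ^ 2) * trace n (mmul n (mtr H) H)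
  <= trace n S.
Proof.
  intros [HS Hpsd] Hric HC Hsig Hlam HWlam Hu Hmax.
  destruct (riccati_quad_split n H C _ W S HS Hric) as [Minv [HM Hsplit]].
  assert (HSlam : forall x, quad n S x >= lam * dot n x x).
  { intros x. rewrite Hsplit. specialize (HWlam x).
    pose proof (posterior_quad_nonneg n S C Minv sig HS HC HM (mvec n (mtr H) x) Hpsd Hsig). lra. }
  rewrite (trace_split n H S W _ Hsplit), trace_HtH, <- rsum_scal.
  apply Rplus_le_compat_l, rsum_le; intros k Hk.
  eapply Rle_trans; [|apply (posterior_quad_lower n S C Minv sig HS HC HM _ lam); [lra | exact Hsig | exact HSlam]].
  unfold dot. rewrite <- rsum_scal. apply rsum_le; intros j Hj.
  apply ratio_ge_max; auto. split; [apply pow2_ge_0 | auto].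
Qed.

Lemma trace_HtH_nonneg n H : 0 <= trace n (mmul n (mtr H) H).
Proof. rewrite trace_HtH. apply rsum_nonneg; intros; apply dot_nonneg. Qed.

Definition gauss_density (z : R) : R := exp (- (z ^ 2) / 2).

Lemma gauss_density_continuous x : continuous gauss_density x.
Proof.
  apply (ex_derive_continuous (K := R_AbsRing) (V := R_NormedModule)).
  unfold gauss_density. auto_derive. auto.
Qed.

Lemma gauss_density_integrable a b : ex_RInt gauss_density a b.
Proof.
  apply (ex_RInt_continuous (V := R_CompleteNormedModule)). intros; apply gauss_density_continuous.
Qed.

Lemma gauss_density_nonneg_integral a b : a <= b -> 0 <= RInt gauss_density a b.
Proof.
  intros Hab. apply RInt_ge_0; [exact Hab | apply gauss_density_integrable |].
  intros; apply Rlt_le, exp_pos.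
Qed.

Lemma exp_mult_INR k x : exp (INR k * x) = exp x ^ k.
Proof.
  induction k as [|k IH]; [simpl; rewrite Rmult_0_l, exp_0; reflexivity|].
  rewrite S_INR, Rmult_plus_distr_r, exp_plus, IH, Rmult_1_l. simpl. ring.
Qed.

Lemma exp_10_ge : 13000 <= exp 10.
Proof.
  replace 10 with (INR 100 * (1 / 10)) by (simpl; lra). rewrite exp_mult_INR.
  assert (1 + 1 / 10 < exp (1 / 10)) by (apply exp_ineq1; lra).
  apply Rle_trans with ((11 / 10) ^ 100); [cbn [pow]; lra | apply pow_incr; lra].
Qed.

Lemma sqrt_2pi_bounds : 2.449 <= sqrt (2 * PI) <= 2.8285.
Proof.
  pose proof PI_4. pose proof PI2_3_2.
  split; [rewrite <- (sqrt_pow2 2.449) | rewrite <- (sqrt_pow2 2.8285)]; try lra;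
    apply sqrt_le_1_alt; simpl; lra.
Qed.

Lemma exp_neg_half_ge : 0.577 <= exp (-1 / 2).
Proof.
  assert (exp (1 / 2) * exp (1 / 2) = exp 1) by (rewrite <- exp_plus; f_equal; lra).
  pose proof exp_le_3. pose proof (exp_pos (1 / 2)).
  assert (exp (1 / 2) <= 1.733) by nra.
  replace (-1 / 2) with (- (1 / 2)) by lra. rewrite exp_Ropp.
  apply Rmult_le_reg_r with (exp (1 / 2)); [assumption|]. rewrite Rinv_l by lra. nra.
Qed.

(* Lower tail estimate: z e^{-z^2/2} / (1 + z^2) has derivative
   -e^{-z^2/2} (z^4 + 2z^2 - 1)/(1 + z^2)^2 >= -e^{-z^2/2}. *)
Lemma gauss_integral_lower K T : K <= 1 -> 1 <= T ->
  exp (-1 / 2) / 2 - 1 / T <= RInt gauss_density K T.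
Proof.
  intros HK HT.
  set (F := fun z => z * exp (- (z ^ 2) / 2) / (1 + z ^ 2)).
  set (g := fun z => exp (- (z ^ 2) / 2) * (z ^ 4 + 2 * z ^ 2 - 1) / (1 + z ^ 2) ^ 2).
  assert (Hderiv : forall z, is_derive (fun z => - F z) z (g z)).
  { intros z. unfold F, g. auto_derive; [nra|].
    replace (exp (- (z * (z * 1)) * / 2)) with (exp (- z ^ 2 / 2)) by (f_equal; field). field. nra. }
  assert (Hgc : forall z, continuous g z).
  { intros. apply (ex_derive_continuous (K := R_AbsRing) (V := R_NormedModule)).
    unfold g. auto_derive. nra. }
  assert (Hg : RInt g 1 T = F 1 - F T).
  { erewrite (is_RInt_unique (V := R_CompleteNormedModule));
      [| apply (is_RInt_derive (V := R_CompleteNormedModule) (fun z => - F z) g); auto].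
    unfold minus, plus, opp; simpl. ring. }
  assert (Hle : RInt g 1 T <= RInt gauss_density 1 T).
  { apply RInt_le; [lra | eexists; apply (is_RInt_derive (fun z => - F z) g); auto
                    | apply gauss_density_integrable |].
    intros z Hz. unfold g, gauss_density, Rdiv. rewrite Rmult_assoc.
    rewrite <- (Rmult_1_r (exp (- z ^ 2 * / 2))) at 2.
    apply Rmult_le_compat_l; [apply Rlt_le, exp_pos|].
    assert (0 < (1 + z ^ 2) ^ 2) by nra.
    apply Rmult_le_reg_r with ((1 + z ^ 2) ^ 2); [assumption|].
    rewrite Rmult_assoc, Rinv_l by lra. nra. }
  assert (Hchasles : RInt gauss_density K T = RInt gauss_density K 1 + RInt gauss_density 1 T)
    by (symmetry; apply (RInt_Chasles gauss_density K 1 T); apply gauss_density_integrable).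
  assert (HF1 : F 1 = exp (-1 / 2) / 2)
    by (unfold F; replace (- 1 ^ 2 / 2) with (-1 / 2) by (simpl; field); simpl; field).
  assert (HFT : F T <= 1 / T).
  { unfold F. assert (exp (- T ^ 2 / 2) <= 1)
      by (rewrite <- exp_0; apply Rlt_le, exp_increasing; nra).
    pose proof (exp_pos (- T ^ 2 / 2)).
    apply Rle_trans with (T / (1 + T ^ 2)).
    { unfold Rdiv. apply Rmult_le_compat_r; [apply Rlt_le, Rinv_0_lt_compat|]; nra. }
    apply Rmult_le_reg_r with (T * (1 + T ^ 2)); [nra|].
    replace (T / (1 + T ^ 2) * (T * (1 + T ^ 2))) with (T * T) by (field; nra).
    replace (1 / T * (T * (1 + T ^ 2))) with (1 + T ^ 2) by (field; lra). nra. }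
  pose proof (gauss_density_nonneg_integral K 1 HK). lra.
Qed.

(* Upper tail estimate for K >= 9/2: e^{-z^2/2} <= (z/K) e^{-z^2/2} on [K, T]. *)
Lemma gauss_integral_upper K T : 9 / 2 <= K -> K <= T ->
  RInt gauss_density K T <= exp (- K ^ 2 / 2) / K.
Proof.
  intros HK HT.
  set (G := fun z => - exp (- (z ^ 2) / 2) / K).
  set (h := fun z => z * exp (- (z ^ 2) / 2) / K).
  assert (Hderiv : forall z, is_derive G z (h z)).
  { intros z. unfold G, h. auto_derive; [lra|].
    replace (exp (- (z * (z * 1)) * / 2)) with (exp (- z ^ 2 / 2)) by (f_equal; field). field. lra. }
  assert (Hhc : forall z, continuous h z).
  { intros. apply (ex_derive_continuous (K := R_AbsRing) (V := R_NormedModule)).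
    unfold h. auto_derive. lra. }
  assert (Hh : RInt h K T = (exp (- K ^ 2 / 2) - exp (- T ^ 2 / 2)) / K).
  { erewrite (is_RInt_unique (V := R_CompleteNormedModule));
      [| apply (is_RInt_derive (V := R_CompleteNormedModule) G h); auto].
    unfold minus, plus, opp, G; simpl. field. lra. }
  assert (Hle : RInt gauss_density K T <= RInt h K T).
  { apply RInt_le; [lra | apply gauss_density_integrable
                    | eexists; apply (is_RInt_derive G h); auto |].
    intros z Hz. unfold h, gauss_density, Rdiv. rewrite (Rmult_comm z), Rmult_assoc.
    rewrite <- (Rmult_1_r (exp (- z ^ 2 * / 2))) at 1.
    apply Rmult_le_compat_l; [apply Rlt_le, exp_pos|].
    apply Rmult_le_reg_r with K; [lra|]. rewrite Rmult_assoc, Rinv_l by lra. lra. }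
  pose proof (exp_pos (- T ^ 2 / 2)).
  assert ((exp (- K ^ 2 / 2) - exp (- T ^ 2 / 2)) / K <= exp (- K ^ 2 / 2) / K)
    by (unfold Rdiv; apply Rmult_le_compat_r; [apply Rlt_le, Rinv_0_lt_compat|]; lra).
  lra.
Qed.

Lemma gauss_tail_approx y q e M : gauss_tail y q -> e > 0 -> y <= M ->
  exists T, M <= T /\ Rabs (RInt gauss_density y T / sqrt (2 * PI) - q) < e.
Proof.
  intros Htail He HM. destruct (Htail e He) as [T0 HT0].
  destruct (HT0 (Rmax T0 M)) as [pr Hpr]; [apply Rmax_l | pose proof (Rmax_r T0 M); lra|].
  exists (Rmax T0 M). split; [apply Rmax_r|].
  rewrite <- RInt_Reals in Hpr. exact Hpr.
Qed.

Lemma gauss_quantile_bounds K d : gauss_tail K d -> 1 / 100000 <= d <= 1 / 10 -> 1 <= K <= 9 / 2.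
Proof.
  intros Htail Hd. pose proof sqrt_2pi_bounds. split.
  - apply Rnot_lt_le. intro HK.
    destruct (gauss_tail_approx K d (1 / 1000) 1000 Htail) as [T [HT Happrox]]; [lra | lra |].
    pose proof (gauss_integral_lower K T (Rlt_le _ _ HK) ltac:(lra)).
    pose proof exp_neg_half_ge.
    assert (1 / T <= 1 / 1000)
      by (unfold Rdiv; rewrite !Rmult_1_l; apply Rinv_le_contravar; lra).
    apply Rabs_def2 in Happrox.
    assert ((0.577 / 2 - 1 / 1000) / 2.8285 <= RInt gauss_density K T / sqrt (2 * PI))
      by (unfold Rdiv; apply Rmult_le_compat;
          [lra | apply Rlt_le, Rinv_0_lt_compat; lra | lra | apply Rinv_le_contravar; lra]).
    lra.
  - apply Rnot_lt_le. intro HK.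
    destruct (gauss_tail_approx K d (1 / 1000000) K Htail) as [T [HT Happrox]]; [lra | lra |].
    pose proof (gauss_integral_upper K T ltac:(lra) HT).
    assert (exp (- K ^ 2 / 2) <= 1 / 13000).
    { apply Rle_trans with (exp (Ropp 10)); [apply Rlt_le, exp_increasing; nra|].
      rewrite exp_Ropp. pose proof exp_10_ge. unfold Rdiv. rewrite Rmult_1_l.
      apply Rinv_le_contravar; lra. }
    assert (exp (- K ^ 2 / 2) / K <= 1 / 13000 / (9 / 2))
      by (unfold Rdiv; pose proof (exp_pos (- K ^ 2 / 2)); apply Rmult_le_compat;
          [lra | apply Rlt_le, Rinv_0_lt_compat; lra | lra | apply Rinv_le_contravar; lra]).
    apply Rabs_def2 in Happrox.
    pose proof (gauss_density_nonneg_integral K T HT).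
    assert (RInt gauss_density K T / sqrt (2 * PI) <= (1 / 13000 / (9 / 2)) / 2.449)
      by (unfold Rdiv; apply Rmult_le_compat;
          [lra | apply Rlt_le, Rinv_0_lt_compat; lra | lra | apply Rinv_le_contravar; lra]).
    lra.
Qed.

(* The noise level is sigma = Delta * F with
   F = (K + sqrt (K^2 + 2 eps)) / (2 eps), the positive root of 2 eps F^2 - 2 K F - 1. *)
Lemma noise_level_pos Delta eps K sigma : Delta > 0 -> eps > 0 -> 0 <= K ->
  sigma = Delta / (2 * eps) * (K + sqrt (K ^ 2 + 2 * eps)) -> sigma > 0.
Proof.
  intros HD He HK ->. apply Rmult_lt_0_compat; [apply Rdiv_lt_0_compat; lra|].
  assert (0 < sqrt (K ^ 2 + 2 * eps)) by (apply sqrt_lt_R0; nra). lra.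
Qed.

(* If eps >= (1 + sqrt (36 eta + 1))^2 / (8 eta^2) and K <= 9/2, then F <= eta:
   the condition gives 2 eps eta^2 >= 1 + 9 eta >= 1 + 2 K eta. *)
Lemma noise_factor_le eps K eta : eps > 0 -> 1 <= K <= 9 / 2 -> eta > 0 ->
  / 8 * ((1 + sqrt (36 * eta + 1)) / eta) ^ 2 <= eps ->
  (K + sqrt (K ^ 2 + 2 * eps)) / (2 * eps) <= eta.
Proof.
  intros He HK Ht Hcond.
  assert (Hs : sqrt (36 * eta + 1) * sqrt (36 * eta + 1) = 36 * eta + 1)
    by (apply sqrt_sqrt; lra).
  pose proof (sqrt_pos (36 * eta + 1)).
  set (s := sqrt (36 * eta + 1)) in *.
  assert (Hs1 : 1 <= s) by nra.
  assert (H1 : (1 + s) ^ 2 <= 8 * eps * eta ^ 2).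
  { replace ((1 + s) ^ 2) with (8 * (/ 8 * ((1 + s) / eta) ^ 2) * eta ^ 2) by (field; lra).
    apply Rmult_le_compat_r; [nra | lra]. }
  assert (H2 : 2 * eps * eta ^ 2 >= 1 + 2 * K * eta) by nra.
  assert (H3 : 2 * eps * eta - K > 0) by nra.
  assert (H4 : sqrt (K ^ 2 + 2 * eps) <= 2 * eps * eta - K).
  { rewrite <- (sqrt_pow2 (2 * eps * eta - K)) by lra. apply sqrt_le_1_alt. nra. }
  apply Rmult_le_reg_r with (2 * eps); [lra|].
  unfold Rdiv. rewrite Rmult_assoc, Rinv_l by lra. lra.
Qed.

(* If eps <= 1 / eta and K >= 1, then F >= eta, since F >= K / eps >= 1 / eps. *)
Lemma noise_factor_ge eps K eta : eps > 0 -> 1 <= K -> eta > 0 -> eps <= / eta ->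
  eta <= (K + sqrt (K ^ 2 + 2 * eps)) / (2 * eps).
Proof.
  intros He HK Ht Hcond.
  assert (sqrt (K ^ 2 + 2 * eps) >= K)
    by (rewrite <- (sqrt_pow2 K) at 2 by lra; apply Rle_ge, sqrt_le_1_alt; lra).
  assert (eps * eta <= 1)
    by (apply Rmult_le_compat_r with (r := eta) in Hcond; [rewrite Rinv_l in Hcond by lra|]; lra).
  apply Rmult_le_reg_r with (2 * eps); [lra|].
  unfold Rdiv. rewrite Rmult_assoc, Rinv_l by lra. lra.
Qed.

Lemma upper_budget Delta eps K sigma c2 t w Bu :
  Delta > 0 -> eps > 0 -> 1 <= K <= 9 / 2 -> 0 < c2 -> 0 <= t -> Bu > w ->
  sigma = Delta / (2 * eps) * (K + sqrt (K ^ 2 + 2 * eps)) ->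
  let eta := sqrt ((Bu - w) * c2 / (Delta ^ 2 * t)) in
  / 8 * ((1 + sqrt (36 * eta + 1)) / eta) ^ 2 <= eps ->
  w + sigma ^ 2 / c2 * t <= Bu.
Proof.
  intros HD He HK Hc Ht HBu Hsig eta Hcond.
  destruct (Req_dec t 0) as [->|Ht0]; [lra|].
  assert (HD2 : 0 < Delta ^ 2) by nra.
  assert (Hpos : (Bu - w) * c2 / (Delta ^ 2 * t) > 0)
    by (apply Rdiv_lt_0_compat; nra).
  assert (Heta : eta > 0) by (apply sqrt_lt_R0; lra).
  assert (Heta2 : eta * eta = (Bu - w) * c2 / (Delta ^ 2 * t)) by (apply sqrt_sqrt; lra).
  pose proof (noise_factor_le eps K eta He HK Heta Hcond) as Hfac.
  assert (0 < sigma <= Delta * eta).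
  { split; [apply (noise_level_pos Delta eps K); auto; lra|].
    rewrite Hsig. replace (Delta / (2 * eps) * (K + sqrt (K ^ 2 + 2 * eps)))
      with (Delta * ((K + sqrt (K ^ 2 + 2 * eps)) / (2 * eps))) by (field; lra).
    apply Rmult_le_compat_l; lra. }
  assert (Hsq : sigma ^ 2 * t <= (Bu - w) * c2).
  { apply Rle_trans with (Delta ^ 2 * (eta * eta) * t); [apply Rmult_le_compat_r; nra|].
    rewrite Heta2. right. field. lra. }
  apply Rmult_le_compat_r with (r := / c2) in Hsq; [|apply Rlt_le, Rinv_0_lt_compat; lra].
  replace (sigma ^ 2 / c2 * t) with (sigma ^ 2 * t * / c2) by (field; lra).
  replace ((Bu - w) * c2 * / c2) with (Bu - w) in Hsq by (field; lra). lra.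
Qed.

Lemma lower_budget Delta eps K sigma lam c2 t w Bl :
  Delta > 0 -> eps > 0 -> 1 <= K -> lam > 0 -> 0 < c2 -> w < Bl < w + t * lam ->
  sigma = Delta / (2 * eps) * (K + sqrt (K ^ 2 + 2 * eps)) ->
  let eta := sqrt ((Bl - w) * lam * c2 / (Delta ^ 2 * (t * lam - Bl + w))) in
  eps <= / eta ->
  Bl <= w + sigma ^ 2 * lam / (sigma ^ 2 + lam * c2) * t.
Proof.
  intros HD He HK Hlam Hc HBl Hsig eta Hcond.
  assert (HD2 : 0 < Delta ^ 2) by nra.
  assert (Hgap : t * lam - Bl + w > 0) by lra.
  assert (Hpos : (Bl - w) * lam * c2 / (Delta ^ 2 * (t * lam - Bl + w)) > 0)
    by (apply Rdiv_lt_0_compat; [assert (0 < (Bl - w) * lam) by nra; nra | nra]).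
  assert (Heta : eta > 0) by (apply sqrt_lt_R0; lra).
  assert (Heta2 : eta * eta = (Bl - w) * lam * c2 / (Delta ^ 2 * (t * lam - Bl + w))) by (apply sqrt_sqrt; lra).
  pose proof (noise_factor_ge eps K eta He HK Heta Hcond) as Hfac.
  assert (Delta * eta <= sigma).
  { rewrite Hsig. replace (Delta / (2 * eps) * (K + sqrt (K ^ 2 + 2 * eps)))
      with (Delta * ((K + sqrt (K ^ 2 + 2 * eps)) / (2 * eps))) by (field; lra).
    apply Rmult_le_compat_l; lra. }
  assert (Hsq : (Bl - w) * lam * c2 <= sigma ^ 2 * (t * lam - Bl + w)).
  { apply Rle_trans with (Delta ^ 2 * (eta * eta) * (t * lam - Bl + w)).
    - rewrite Heta2. right. field. lra.
    - apply Rmult_le_compat_r; [lra|]. assert (0 < Delta * eta) by nra. nra. }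
  assert (Hden : 0 < sigma ^ 2 + lam * c2) by (pose proof (pow2_ge_0 sigma); nra).
  cut (Bl - w <= sigma ^ 2 * lam / (sigma ^ 2 + lam * c2) * t); [lra|].
  apply Rmult_le_reg_r with (sigma ^ 2 + lam * c2); [exact Hden|].
  replace (sigma ^ 2 * lam / (sigma ^ 2 + lam * c2) * t * (sigma ^ 2 + lam * c2))
    with (sigma ^ 2 * lam * t) by (field; lra).
  nra.
Qed.

Theorem theorem5
  (n : nat) (H W C : mat) (m : nat) (D : mat)
  (HW : posdef n W)
  (HWD : meq n n W (mmul m D (mtr D)))
  (HC : diag_nonsingular n C)
  (Hobs : observable n n H C)
  (Hctr : controllable n m H D)
  (Delta : R) (HDelta : Delta > 0)
  (delta : R) (Hdelta : 1/100000 <= delta <= 1/10)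
  (eps : R) (Heps : eps > 0)
  (Kd : R) (HKd : gauss_tail Kd delta)   (* Kd = Q^{-1}(delta) *)
  (sigma : R)
  (Hsigma : sigma = Delta / (2 * eps) * (Kd + sqrt (Kd ^ 2 + 2 * eps)))
  (Sigma : mat)
  (HSpsd : possemidef n Sigma)
  (HSric : riccati n H C (mscal (sigma ^ 2) mid) W Sigma)
  (HSuniq : forall S, possemidef n S -> riccati n H C (mscal (sigma ^ 2) mid) W S ->
              meq n n S Sigma)
  (lamW : R) (HlamW : is_min_eigenvalue n W lamW)
  (l u : nat) (Hl : (l < n)%nat) (Hu : (u < n)%nat)
  (Hlmin : forall i, (i < n)%nat -> (C l l) ^ 2 <= (C i i) ^ 2)
  (Humax : forall i, (i < n)%nat -> (C i i) ^ 2 <= (C u u) ^ 2)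
  (Bl Bu : R)
  (HBl : trace n W < Bl < trace n W + trace n (mmul n (mtr H) H) * lamW)
  (HBu : Bu > trace n W) :
  let trHH := trace n (mmul n (mtr H) H) in
  let eta1 := sqrt ((Bl - trace n W) * lamW * (C u u) ^ 2 /
                    (Delta ^ 2 * (trHH * lamW - Bl + trace n W))) in
  let eta3 := sqrt ((Bu - trace n W) * (C l l) ^ 2 / (Delta ^ 2 * trHH)) in
  (/ 8 * ((1 + sqrt (36 * eta3 + 1)) / eta3) ^ 2 <= eps -> trace n Sigma <= Bu) /\
  (eps <= / eta1 -> Bl <= trace n Sigma).
Proof.
  intros trHH eta1 eta3.
  destruct (gauss_quantile_bounds Kd delta HKd Hdelta) as [HK1 HK2].
  assert (Hsig : sigma > 0) by (apply (noise_level_pos Delta eps Kd); auto; lra).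
  assert (HCsq : forall i, (i < n)%nat -> 0 < C i i ^ 2)
    by (intros i Hi; pose proof (Rsqr_pos_lt _ (proj2 HC i Hi)); unfold Rsqr in *; nra).
  assert (Hlam : lamW > 0) by (apply (posdef_eigenvalue_pos n W); [exact HW | apply HlamW]).
  pose proof (min_eigenvalue_bound n W lamW HW ltac:(lia) HlamW) as HWlam.
  split; intros Hcond.
  - eapply Rle_trans; [apply (riccati_trace_upper n H C W Sigma sigma l); assumption|].
    apply (upper_budget Delta eps Kd); auto using trace_HtH_nonneg.
  - eapply Rle_trans; [|apply (riccati_trace_lower n H C W Sigma sigma lamW u); auto; lra].
    apply (lower_budget Delta eps Kd); auto; lra.
Qed.
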